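(* Let $E, F$ be Banach lattices and $T: E \to F$ a bounded linear operator such that $T': F' \to E'$ maps disjoint sequences onto disjoint sequences. If $A \subset E$ is almost Grothendieck, then $T(A)$ is almost Grothendieck in $F$.
   Context: For a Banach lattice $G$, every bounded linear operator $S: G \to c_0$ has the form $S(x) = (x_n'(x))_n$ for a unique weak* null sequence $(x_n') \subset G'$; $S$ is a disjoint operator if $(x_n')$ is disjoint in $G'$. A subset $A \subset G$ is almost Grothendieck if $S(A)$ is relatively weakly compact in $c_0$ for every disjoint operator $S: G \to c_0$. *)

From HB Require Import structures.
From mathcomp Require Import all_boot all_order all_algebra.
From mathcomp Require Import all_classical all_reals.
From mathcomp Require Import topology normedtype sequences.
Set Implicit Arguments. Unset Strict Implicit. Unset Printing Implicit Defensive.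
Import Order.TTheory GRing.Theory Num.Theory.
Import numFieldNormedType.Exports.
Local Open Scope classical_set_scope.
Local Open Scope ring_scope.

Section BanachLattice.
Context {R : realType} {E : normedModType R}.
Variables (le : E -> E -> Prop) (join : E -> E -> E).

Definition labs (x : E) : E := join x (- x).

Record is_banach_lattice : Prop := BanachLattice {
  bl_refl : forall x, le x x;
  bl_antisym : forall x y, le x y -> le y x -> x = y;
  bl_trans : forall x y z, le x y -> le y z -> le x z;
  bl_add : forall x y z, le x y -> le (x + z) (y + z);
  bl_scale : forall (a : R) x y, 0 <= a -> le x y -> le (a *: x) (a *: y);
  bl_join_ubl : forall x y, le x (join x y);
  bl_join_ubr : forall x y, le y (join x y);
  bl_join_least : forall x y z, le x z -> le y z -> le (join x y) z;
  bl_norm : forall x y, le (labs x) (labs y) -> `|x| <= `|y| }.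

Definition bounded_functional (f : E -> R) : Prop :=
  (forall x y, f (x + y) = f x + f y) /\
  (forall (a : R) x, f (a *: x) = a * f x) /\
  (exists C : R, forall x, `|f x| <= C * `|x|).

Definition dual_le (f g : E -> R) : Prop := forall x, le 0 x -> f x <= g x.

Definition dual_is_sup (S : set (E -> R)) (s : E -> R) : Prop :=
  [/\ bounded_functional s, (forall f, S f -> dual_le f s) &
      (forall t, bounded_functional t -> (forall f, S f -> dual_le f t) -> dual_le s t)].

Definition dual_is_inf (S : set (E -> R)) (i : E -> R) : Prop :=
  [/\ bounded_functional i, (forall f, S f -> dual_le i f) &
      (forall t, bounded_functional t -> (forall f, S f -> dual_le t f) -> dual_le t i)].

Definition dual_abs (f a : E -> R) : Prop :=
  dual_is_sup [set f; (fun x => - f x)] a.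

Definition dual_disjoint (f g : E -> R) : Prop :=
  exists a b, [/\ dual_abs f a, dual_abs g b & dual_is_inf [set a; b] (fun _ => 0)].

Definition dual_disjoint_seq (x' : nat -> E -> R) : Prop :=
  (forall n, bounded_functional (x' n)) /\
  (forall n m, n <> m -> dual_disjoint (x' n) (x' m)).

Definition weakstar_null (x' : nat -> E -> R) : Prop :=
  (forall n, bounded_functional (x' n)) /\
  (forall x, (fun n => x' n x) @ \oo --> (0 : R)).

End BanachLattice.

Definition c0 (R : realType) := {u : nat -> R | u @ \oo --> (0 : R)}.
HB.instance Definition _ (R : realType) := gen_eqMixin (c0 R).
HB.instance Definition _ (R : realType) := gen_choiceMixin (c0 R).

Definition c0_sup_norm (R : realType) (u : c0 R) : R :=
  sup [set `|proj1_sig u n| | n in [set: nat]].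

Definition c0_bounded_functional (R : realType) (phi : c0 R -> R) : Prop :=
  (forall u v w : c0 R, (forall n, proj1_sig w n = proj1_sig u n + proj1_sig v n) ->
     phi w = phi u + phi v) /\
  (forall (a : R) (u w : c0 R), (forall n, proj1_sig w n = a * proj1_sig u n) ->
     phi w = a * phi u) /\
  (exists C : R, forall u, `|phi u| <= C * c0_sup_norm u).

Definition c0_dual (R : realType) := {phi : c0 R -> R | c0_bounded_functional phi}.

Definition c0_eval (R : realType) (u : c0 R) : {ptws c0_dual R -> R} :=
  fun phi => proj1_sig phi u.

Definition c0_weak (R : realType) := initial_topology (@c0_eval R).

Definition rel_weakly_compact_c0 (R : realType) (B : set (c0 R)) : Prop :=
  compact (closure (B : set (c0_weak R))).

(* Almost Grothendieck sets.  A bounded operator S : G -> c0 is        *)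
(* S x = (x'_n x)_n for a weak* null sequence (x'_n) in G'; S is        *)
(* disjoint iff (x'_n) is disjoint.  S(A) is described as a subset of c0.*)
Definition almost_grothendieck (R : realType) (G : normedModType R)
    (le : G -> G -> Prop) (A : set G) : Prop :=
  forall x' : nat -> G -> R,
    weakstar_null x' -> dual_disjoint_seq le x' ->
    rel_weakly_compact_c0 [set u : c0 R | exists2 a, A a & forall n, proj1_sig u n = x' n a].

Definition bounded_operator (R : realType) (E F : normedModType R) (T : E -> F) : Prop :=
  (forall x y, T (x + y) = T x + T y) /\
  (forall (a : R) x, T (a *: x) = a *: T x) /\
  (exists C : R, forall x, `|T x| <= C * `|x|).

From HB Require Import structures.
From mathcomp Require Import all_boot all_order all_algebra.
From mathcomp Require Import all_classical all_reals.
From mathcomp Require Import topology normedtype sequences.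
Local Open Scope classical_set_scope.
Local Open Scope ring_scope.

(* If S : F -> c0 is the disjoint operator given by the disjoint weak* null
   sequence (y'_n), then S T : E -> c0 is given by (T' y'_n) = (y'_n T), which
   is again weak* null, and disjoint by the hypothesis on T'.  Since
   S(T(A)) = (S T)(A), the almost Grothendieck property of A transfers. *)

Definition c0_image {R : realType} {G : Type} (x' : nat -> G -> R) (A : set G)
    : set (c0 R) :=
  [set u : c0 R | exists2 a, A a & forall n, proj1_sig u n = x' n a].

Lemma c0_image_comp {R : realType} {G H : Type} (T : G -> H)
    (y' : nat -> H -> R) (A : set G) :
  c0_image y' (T @` A) = c0_image (fun n => y' n \o T) A.
Proof.
apply/seteqP; split=> u /=.
- by move=> [_ [a Aa <-] uE]; exists a.
- by move=> [a Aa uE]; exists (T a) => //; exists a.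
Qed.

Lemma weakstar_null_comp {R : realType} {E F : normedModType R} (T : E -> F)
    (y' : nat -> F -> R) :
  (forall n, bounded_functional (y' n \o T)) ->
  weakstar_null y' -> weakstar_null (fun n => y' n \o T).
Proof. by move=> bdd [_ y'0]; split=> // x; exact: y'0. Qed.

Theorem mainTheorem14 (R : realType)
  (E : completeNormedModType R) (leE : E -> E -> Prop) (joinE : E -> E -> E)
  (F : completeNormedModType R) (leF : F -> F -> Prop) (joinF : F -> F -> F)
  (T : E -> F) (A : set E) :
  is_banach_lattice leE joinE ->
  is_banach_lattice leF joinF ->
  bounded_operator T ->
  (* T' : F' -> E', y' |-> y' \o T, maps disjoint sequences to disjoint sequences *)
  (forall y' : nat -> F -> R, dual_disjoint_seq leF y' ->
     dual_disjoint_seq leE (fun n => y' n \o T)) ->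
  almost_grothendieck leE A ->
  almost_grothendieck leF (T @` A).
Proof.
move=> _ _ _ T'disj agA y' y'null y'disj.
have y'Tdisj := T'disj y' y'disj.
have y'Tnull : weakstar_null (fun n => y' n \o T).
  by apply: weakstar_null_comp => //; case: y'Tdisj.
rewrite -/(c0_image y' (T @` A)) c0_image_comp.
exact: agA.
Qed.
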